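(* Let $T$ be a tree and let $D\subseteq L(T)$ be a set of legs of $T$ with an even number of elements. Then there exists a unique cycle $C$ in $T$ whose set of legs is $D$.
   Context: A graph $T$ is a finite set $X(T)$ with idempotent root map $r$ and involution $\iota$ fixing $r(X(T))$ pointwise; vertices are $r(X(T))$, half-edges the rest, edges the size-2 $\iota$-orbits of half-edges, legs the $\iota$-fixed half-edges. A tree is a connected weighted graph of genus $0$ (so $\#E-\#V+1=0$ and all vertex weights are $0$). A subgraph is a subset of $X(T)$ preserved by $r$ and $\iota$, with weights restricted. For a subgraph $C$ and $v\in V(C)$, $\mathrm{val}_C(v)$ is the number of half-edges of $C$ rooted at $v$. A cycle in $T$ is a subgraph $C$ such that every vertex $v$ of $C$ satisfies $2-2g(v)-\mathrm{val}_C(v)\leq0$ and $\mathrm{val}_C(v)$ is even. The legs of $C$ are the legs of $T$ lying in $C$. *)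

From mathcomp Require Import all_boot all_order all_algebra.
Set Implicit Arguments. Unset Strict Implicit. Unset Printing Implicit Defensive.
Import GRing.Theory Num.Theory.

(* A (weighted) graph: finite set X with idempotent root map r and an
   involution iota fixing r(X) pointwise; vertex weights g (only the values
   at vertices matter). *)
Record graph := Graph {
  gX : finType;
  groot : gX -> gX;
  giota : gX -> gX;
  gweight : gX -> nat;
  groot_idem : forall x, groot (groot x) = groot x;
  giota_invol : forall x, giota (giota x) = x;
  giota_root : forall x, giota (groot x) = groot x
}.

Section GraphDefs.
Variable T : graph.
Local Notation X := (gX T) (only parsing).
Local Notation r := (@groot T) (only parsing).
Local Notation iota := (@giota T) (only parsing).

Definition vertices : {set X} := [set x | r x == x].
Definition half_edges : {set X} := [set x | r x != x].
Definition legs : {set X} := [set x in half_edges | iota x == x].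
Definition edges : {set {set X}} :=
  [set [set x; iota x] | x in [set x in half_edges | iota x != x]].

Definition adj : rel X := fun v w =>
  [exists h, [&& h \in half_edges, iota h != h, r h == v & r (iota h) == w]].

Definition connected_graph : Prop :=
  forall v w, v \in vertices -> w \in vertices -> fingraph.connect adj v w.

(* tree: connected, genus 0 (#E - #V + 1 = 0 and all vertex weights 0) *)
Definition is_tree : Prop :=
  [/\ connected_graph,
      ((Posz #|edges| - Posz #|vertices| + 1)%R = (0%R : int))
    & forall v, v \in vertices -> @gweight T v = 0%N].

Definition subgraph (C : {set X}) : Prop :=
  forall x, x \in C -> r x \in C /\ iota x \in C.

Definition val (C : {set X}) (v : X) : nat :=
  #|[set h in C | (h \in half_edges) && (r h == v)]|.

Definition is_cycle (C : {set X}) : Prop :=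
  subgraph C /\
  forall v, v \in C -> v \in vertices ->
    ((2 - 2 * Posz (@gweight T v) - Posz (val C v) <= (0 : int))%R /\ ~~ odd (val C v)).

Definition legs_of (C : {set X}) : {set X} := C :&: legs.

End GraphDefs.

From Pilot Require Import Defs.
From mathcomp Require Import all_boot all_order all_algebra.
From mathcomp Require Import zify.
Set Implicit Arguments. Unset Strict Implicit. Unset Printing Implicit Defensive.

(** Work over GF(2): the boundary of a set of half-edges is the set of vertices
   at which an odd number of them is rooted. On a connected graph the boundary
   maps iota-closed sets of inner half-edges (i.e. sets of edges) onto the
   vertex sets of even size, since a path contributes the boundary {v, w}. For
   a tree there are 2^#E edge sets and 2^(#V - 1) = 2^#E even vertex sets, so
   this map is a bijection. A cycle is determined by its half-edges, which are
   its inner half-edges together with its legs and have empty boundary; hence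
   cycles with leg set D correspond to the edge sets whose boundary is the
   boundary of D, and there is exactly one of those. *)

Section Parity.
Variable T : finType.
Implicit Types A B : {set T}.

Definition symdiff A B : {set T} := (A :\: B) :|: (B :\: A).

Lemma in_symdiff A B x : (x \in symdiff A B) = (x \in A) (+) (x \in B).
Proof. by rewrite !inE; case: (x \in A); case: (x \in B). Qed.

Lemma odd_card_symdiff A B : odd #|symdiff A B| = odd #|A| (+) odd #|B|.
Proof.
have disjAB : (A :\: B) :&: (B :\: A) = set0.
  by apply/setP=> x; rewrite !inE; case: (x \in A); case: (x \in B).
rewrite cardsU disjAB cards0 subn0 -(cardsID B A) -(cardsID A B) setIC !oddD.
by case: (odd _); case: (odd _); case: (odd _).
Qed.

Lemma symdiff_eq0 A B : (symdiff A B == set0) = (A == B).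
Proof.
apply/eqP/eqP => [/setP eqAB | ->]; last first.
  by apply/setP => x; rewrite in_symdiff addbb inE.
apply/setP => x; move: (eqAB x); rewrite in_symdiff inE.
by case: (x \in A); case: (x \in B).
Qed.

Lemma symdiff_disjoint A B : [disjoint A & B] -> symdiff A B = A :|: B.
Proof.
move/pred0P => disjAB; apply/setP => x; rewrite in_symdiff inE.
by move: (disjAB x) => /=; case: (x \in A); case: (x \in B).
Qed.

Lemma odd_card_odd_sum A (F : T -> nat) :
  odd (\sum_(i in A) F i) = odd #|[set i in A | odd (F i)]|.
Proof.
have -> : #|[set i in A | odd (F i)]| = \sum_(i in A) odd (F i).
  rewrite -sum1_card (eq_bigl (fun i => (i \in A) && odd (F i))) => [|i].
    by rewrite big_mkcondr; apply: eq_bigr => i _; case: (odd _).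
  by rewrite inE.
elim/big_rec2: _ => // i a b _ IH.
by rewrite !oddD IH; case: (odd (F i)).
Qed.

End Parity.

Section Boundary.
Variable T : graph.
Local Notation X := (gX T).
Local Notation r := (@groot T).
Local Notation iota := (@giota T).
Implicit Types (K H C D S : {set X}) (v w x h : X).

Definition deg K v : nat := #|[set h in K | r h == v]|.

Definition boundary K : {set X} := [set v in vertices T | odd (deg K v)].

Lemma root_vertex x : r x \in vertices T.
Proof. by rewrite inE groot_idem. Qed.

Lemma root_notin_half_edges x : r x \notin half_edges T.
Proof. by rewrite inE groot_idem negbK. Qed.

Lemma odd_deg_symdiff K H v :
  odd (deg (symdiff K H) v) = odd (deg K v) (+) odd (deg H v).
Proof.
rewrite /deg -odd_card_symdiff; congr (odd _); apply: eq_card => x.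
by rewrite !inE; case: (x \in K); case: (x \in H); case: (r x == v).
Qed.

Lemma boundary_symdiff K H : boundary (symdiff K H) = symdiff (boundary K) (boundary H).
Proof.
apply/setP => v; rewrite in_symdiff !inE odd_deg_symdiff.
by case: (r v == v).
Qed.

Lemma boundary0 : boundary set0 = set0.
Proof.
apply/setP => v; rewrite !inE /deg.
suff -> : [set h in (set0 : {set X}) | r h == v] = set0 by rewrite cards0 andbF.
by apply/setP => x; rewrite !inE.
Qed.

Lemma deg_set1 h v : deg [set h] v = (r h == v).
Proof.
rewrite /deg; have [rhv | rhNv] := eqVneq (r h) v.
  suff -> : [set x in [set h] | r x == v] = [set h] by rewrite cards1.
  by apply/setP => x; rewrite !inE; case: (eqVneq x h) => // ->; rewrite rhv eqxx.
apply/eqP; rewrite cards_eq0; apply/eqP/setP => x; rewrite !inE.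
by case: (eqVneq x h) => // ->; rewrite (negbTE rhNv).
Qed.

Lemma boundary_set1 h : boundary [set h] = [set r h].
Proof.
apply/setP => v; rewrite [in LHS]inE in_set1 deg_set1 oddb eq_sym.
by case: (eqVneq v (r h)) => [->|]; rewrite ?root_vertex ?andbF.
Qed.

(** Handshake lemma: every element of [K] is counted in the degree of its root. *)
Lemma odd_card_boundary K : odd #|boundary K| = odd #|K|.
Proof.
suff -> : #|K| = \sum_(v in vertices T) deg K v by rewrite odd_card_odd_sum.
rewrite -sum1_card (partition_big r (mem (vertices T))) => [|x _]; last exact: root_vertex.
by apply: eq_bigr => v _; rewrite /deg -sum1_card; apply: eq_bigl => h; rewrite inE.
Qed.

Lemma iota_half_edge h : h \in half_edges T -> iota h \in half_edges T.
Proof.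
rewrite !inE; apply: contra => /eqP rih.
have hE : h = iota h by rewrite -{1}(giota_invol h) -{1}rih giota_root rih.
by rewrite {1}hE rih -hE.
Qed.

Lemma mem_iota_legs D x : D \subset legs T -> (iota x \in D) = (x \in D).
Proof.
move=> sDL; apply/idP/idP => [ixD | xD].
  by move: (subsetP sDL _ ixD); rewrite inE giota_invol => /andP [_ /eqP ->].
by move: (subsetP sDL _ xD); rewrite inE => /andP [_ /eqP ->].
Qed.

Definition inner_half_edges : {set X} := [set h in half_edges T | iota h != h].

Definition edge_sets : {set {set X}} :=
  [set H : {set X} | (H \subset inner_half_edges) && [forall h in H, iota h \in H]].

Lemma iota_inner h : h \in inner_half_edges -> iota h \in inner_half_edges.
Proof.
rewrite inE => /andP [hh ih].
by rewrite inE giota_invol eq_sym ih andbT iota_half_edge.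
Qed.

Lemma inner_notin_legs x : x \in inner_half_edges -> x \notin legs T.
Proof. by rewrite !inE => /andP [_ /negbTE ->]; rewrite andbF. Qed.

Lemma mem_iota_edge_set H h : H \in edge_sets -> (iota h \in H) = (h \in H).
Proof.
rewrite inE => /andP [_ /forall_inP iotaH].
by apply/idP/idP => [/iotaH | /iotaH //]; rewrite giota_invol.
Qed.

Lemma set0_edge_set : set0 \in edge_sets.
Proof. by rewrite inE sub0set; apply/forall_inP => x; rewrite inE. Qed.

Lemma symdiff_edge_set H1 H2 :
  H1 \in edge_sets -> H2 \in edge_sets -> symdiff H1 H2 \in edge_sets.
Proof.
move=> E1 E2; have := E1; have := E2; rewrite !inE => /andP [s2 _] /andP [s1 _].
apply/andP; split; last by apply/forall_inP => x; rewrite !in_symdiff !mem_iota_edge_set.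
apply/subsetP => x; rewrite in_symdiff.
by case: (boolP (x \in H1)) => [/(subsetP s1) // | _ /(subsetP s2)].
Qed.

Lemma edge_edge_set h : h \in inner_half_edges -> [set h; iota h] \in edge_sets.
Proof.
move=> hI; rewrite inE; apply/andP; split.
  by apply/subsetP => x; rewrite !in_set2 => /orP [] /eqP ->; rewrite ?iota_inner.
by apply/forall_inP => x; rewrite !in_set2 => /orP [] /eqP ->; rewrite ?giota_invol eqxx ?orbT.
Qed.

Lemma boundary_edge h : h \in inner_half_edges ->
  boundary [set h; iota h] = symdiff [set r h] [set r (iota h)].
Proof.
rewrite inE => /andP [_ ihNh].
suff -> : [set h; iota h] = symdiff [set h] [set iota h].
  by rewrite boundary_symdiff !boundary_set1.
by rewrite symdiff_disjoint // disjoints1 in_set1 eq_sym.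
Qed.

Lemma boundary_connect v w : fingraph.connect (@adj T) v w ->
  exists2 H, H \in edge_sets & boundary H = symdiff [set v] [set w].
Proof.
move/fingraph.connectP => [p + ->]; elim: p v => [|u p IHp] v /=.
  exists set0; first exact: set0_edge_set.
  by rewrite boundary0; apply/eqP; rewrite eq_sym symdiff_eq0.
case/andP => /existsP [h /and4P [hh ihNh /eqP rhv /eqP rihu]] /IHp [H EH bdH].
have hI : h \in inner_half_edges by rewrite inE hh ihNh.
exists (symdiff [set h; iota h] H); first by rewrite symdiff_edge_set ?edge_edge_set.
rewrite boundary_symdiff bdH boundary_edge // rhv rihu; apply/setP => x.
by rewrite !in_symdiff addbA addbK.
Qed.

Lemma boundary_onto_even_sets S : connected_graph T ->
  S \subset vertices T -> ~~ odd #|S| -> exists2 H, H \in edge_sets & boundary H = S.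
Proof.
move=> conn; have [n] := ubnP #|S|; elim: n S => // n IHn S ltSn sSV evS.
have [-> | [v vS]] := set_0Vmem S; first by exists set0; rewrite ?set0_edge_set ?boundary0.
have cardSv : #|S| = #|S :\ v|.+1 by rewrite (cardsD1 v S) vS.
have [w wSv] : exists w, w \in S :\ v.
  by apply/set0Pn; rewrite -card_gt0; move: evS; rewrite cardSv; case: #|_|.
have [wNv wS] := setD1P wSv.
have cardSvw : #|S :\ v| = #|S :\ v :\ w|.+1 by rewrite (cardsD1 w (S :\ v)) wSv.
have [H EH bdH] : exists2 H, H \in edge_sets & boundary H = S :\ v :\ w.
  apply: IHn; first by lia.
    by apply: subset_trans sSV; exact: subset_trans (subsetDl _ _) (subsetDl _ _).
  by move: evS; rewrite cardSv cardSvw /= negbK.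
have [P EP bdP] := boundary_connect (conn v w (subsetP sSV v vS) (subsetP sSV w wS)).
exists (symdiff H P); first exact: symdiff_edge_set.
rewrite boundary_symdiff bdH bdP; apply/setP => x; rewrite !in_symdiff !inE.
case: (eqVneq x v) => [-> | xNv]; first by rewrite vS eq_sym (negbTE wNv).
by case: (eqVneq x w) => [-> | xNw] /=; rewrite ?wS ?andbF ?andbT ?addbF.
Qed.

Lemma card_edge_sets : #|edge_sets| <= 2 ^ #|edges T|.
Proof.
pose edges_in H := [set e in edges T | e \subset H].
suff inj : {in edge_sets &, injective edges_in}.
  rewrite -(card_in_imset inj) -card_powerset; apply: subset_leq_card.
  apply/subsetP => F /imsetP [H _ ->]; rewrite powersetE.
  by apply/subsetP => e; rewrite inE => /andP [].
move=> H1 H2 E1 E2 eqH; apply/setP => x.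
have [xI | xNI] := boolP (x \in inner_half_edges); last first.
  have notin H : H \in edge_sets -> (x \in H) = false.
    by rewrite inE => /andP [sHI _]; apply: contraNF xNI => /(subsetP sHI).
  by rewrite !notin.
have memE H : H \in edge_sets -> (x \in H) = ([set x; iota x] \in edges_in H).
  move=> EH; rewrite inE (imset_f _ xI) /=; apply/idP/subsetP => [xH y | sH].
    by rewrite !inE => /orP [] /eqP ->; rewrite ?mem_iota_edge_set.
  by apply: sH; rewrite !inE eqxx.
by rewrite !memE // eqH.
Qed.

Definition even_vertex_sets : {set {set X}} :=
  [set S : {set X} | (S \subset vertices T) && ~~ odd #|S|].

(** Adjoining [v0] to the odd subsets of the other vertices injects all of them
   into the even vertex sets. *)
Lemma card_even_vertex_sets v0 : v0 \in vertices T ->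
  2 ^ #|vertices T|.-1 <= #|even_vertex_sets|.
Proof.
move=> v0V; pose evenize (U : {set X}) := if odd #|U| then v0 |: U else U.
have v0NU (U : {set X}) : U \in powerset (vertices T :\ v0) -> v0 \notin U.
  by rewrite powersetE => sU; apply: contraTN isT => /(subsetP sU); rewrite !inE eqxx.
have inj : {in powerset (vertices T :\ v0) &, injective evenize}.
  suff evenizeK (U : {set X}) : U \in powerset (vertices T :\ v0) -> evenize U :\ v0 = U.
    by move=> U1 U2 P1 P2 eqU; rewrite -(evenizeK U1) // -(evenizeK U2) // eqU.
  move=> PU; rewrite /evenize; case: (odd _); first by rewrite setU1K ?v0NU.
  by apply/setDidPl; rewrite disjoint_sym disjoints1 v0NU.
rewrite (cardsD1 v0 (vertices T)) v0V -card_powerset -(card_in_imset inj).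
apply/subset_leq_card/subsetP => S /imsetP [U PU ->].
have sUV : U \subset vertices T.
  by move: PU; rewrite powersetE => /subset_trans; apply; exact: subsetDl.
rewrite inE /evenize; case: (boolP (odd #|U|)) => oddU; last by rewrite sUV.
by rewrite cardsU1 v0NU //= oddU subUset sub1set v0V sUV.
Qed.

Lemma tree_boundary_inj : is_tree T -> {in edge_sets &, injective boundary}.
Proof.
case=> conn cardVE _.
have cardV : #|vertices T| = (#|edges T|).+1 by lia.
have [v0 v0V] : exists v0, v0 \in vertices T by apply/card_gt0P; rewrite cardV.
have sBim : even_vertex_sets \subset boundary @: edge_sets.
  apply/subsetP => S; rewrite inE => /andP [sSV evS].
  by have [H EH <-] := boundary_onto_even_sets conn sSV evS; exact: imset_f.
apply/imset_injP; rewrite eqn_leq leq_imset_card /=.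
apply: leq_trans card_edge_sets _; apply: leq_trans (subset_leq_card sBim).
by have := card_even_vertex_sets v0V; rewrite cardV.
Qed.

Definition add_roots K : {set X} := K :|: r @: K.

Lemma val_deg C v : Defs.val C v = deg (C :&: half_edges T) v.
Proof. by apply: eq_card => x; rewrite !inE andbA. Qed.

Lemma add_roots_half_edges K : K \subset half_edges T ->
  add_roots K :&: half_edges T = K.
Proof.
move=> sKH; apply/setP => x; rewrite in_setI in_setU.
have [xK | _] /= := boolP (x \in K); first exact: subsetP sKH x xK.
by apply/negbTE/andP => -[/imsetP [k _ ->]]; apply/negP; exact: root_notin_half_edges.
Qed.

Lemma legs_of_add_roots K : K \subset half_edges T -> legs_of (add_roots K) = K :&: legs T.
Proof.
move=> sKH; have sLH : legs T \subset half_edges T.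
  by apply/subsetP => x; rewrite inE => /andP [].
by rewrite /legs_of -(setIidPr sLH) !setIA add_roots_half_edges // (setIidPl sKH).
Qed.

Lemma add_roots_cycle K : K \subset half_edges T -> {in K, forall x, iota x \in K} ->
  boundary K = set0 -> is_cycle (add_roots K).
Proof.
move=> sKH iotaK bdK; split.
  move=> x; rewrite in_setU => /orP [xK | /imsetP [k kK ->]].
    by rewrite !in_setU imset_f ?iotaK ?orbT.
  by rewrite groot_idem giota_root in_setU imset_f ?orbT.
move=> v vC vV.
have evv : ~~ odd (Defs.val (add_roots K) v).
  rewrite val_deg add_roots_half_edges //.
  by apply: contra_eqN bdK => oddv; apply/set0Pn; exists v; rewrite inE vV.
have posv : 0 < Defs.val (add_roots K) v.
  rewrite val_deg add_roots_half_edges //.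
  move: vC; rewrite inE => /orP [vK | /imsetP [k kK vk]].
    by move: (subsetP sKH v vK) vV; rewrite !inE => /negbTE ->.
  by apply/card_gt0P; exists k; rewrite inE kK vk eqxx.
split=> //; move: evv posv; case: (Defs.val _ v) => [|[|n]] //= _ _; lia.
Qed.

Lemma cycle_add_roots C : (forall v, v \in vertices T -> gweight v = 0) ->
  is_cycle C -> C = add_roots (C :&: half_edges T).
Proof.
move=> weight0 [subC cycC]; apply/setP => x; apply/idP/idP; last first.
  rewrite inE => /orP [/setIP [] // | /imsetP [h /setIP [hC _] ->]].
  exact: (subC h hC).1.
move=> xC; rewrite inE; have [xH | xNH] := boolP (x \in half_edges T).
  by rewrite inE xC xH.
have xV : x \in vertices T by move: xNH; rewrite !inE negbK.
have [valx _] := cycC x xC xV; rewrite weight0 // in valx.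
have /card_gt0P [h] : 0 < Defs.val C x by lia.
by rewrite inE => /andP [hC /andP [hH /eqP <-]]; rewrite imset_f ?orbT // in_setI hC hH.
Qed.

Lemma cycle_boundary C : is_cycle C -> boundary (C :&: half_edges T) = set0.
Proof.
case=> subC cycC; apply/setP => v; rewrite inE in_set0 -val_deg.
apply/andP => -[vV oddv]; have [vC | vNC] := boolP (v \in C).
  by have [_ /negP] := cycC v vC vV.
suff : Defs.val C v = 0 by move=> val0; rewrite val0 in oddv.
apply/eqP; rewrite cards_eq0; apply/eqP/setP => x; rewrite !inE.
by apply/and3P => -[xC _ /eqP rxv]; move: vNC; rewrite -rxv (subC x xC).1.
Qed.

Lemma half_edges_split C :
  C :&: half_edges T = symdiff (C :&: inner_half_edges) (legs_of C).
Proof.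
apply/setP => x; rewrite in_symdiff /legs_of !inE.
by case: (x \in C); case: (r x == x); case: (iota x == x).
Qed.

Lemma cycle_edge_set C : is_cycle C -> C :&: inner_half_edges \in edge_sets.
Proof.
case=> subC _; rewrite inE subsetIr; apply/forall_inP => x.
by rewrite !in_setI => /andP [xC xI]; rewrite (subC x xC).2 iota_inner.
Qed.

Lemma cycle_inner_boundary C : is_cycle C ->
  boundary (C :&: inner_half_edges) = boundary (legs_of C).
Proof.
move=> cycC; apply/eqP; rewrite -symdiff_eq0 -boundary_symdiff -half_edges_split.
by rewrite cycle_boundary.
Qed.

Lemma tree_cycle_uniq C1 C2 : is_tree T -> is_cycle C1 -> is_cycle C2 ->
  legs_of C1 = legs_of C2 -> C1 = C2.
Proof.
move=> tree cyc1 cyc2 eqL; have [_ _ weight0] := tree.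
have eqI : C1 :&: inner_half_edges = C2 :&: inner_half_edges.
  apply: (tree_boundary_inj tree (cycle_edge_set cyc1) (cycle_edge_set cyc2)).
  by rewrite !cycle_inner_boundary // eqL.
rewrite (cycle_add_roots weight0 cyc1) (cycle_add_roots weight0 cyc2).
by rewrite !half_edges_split eqI eqL.
Qed.

Lemma tree_cycle_exists D : is_tree T -> D \subset legs T -> ~~ odd #|D| ->
  exists C, is_cycle C /\ legs_of C = D.
Proof.
move=> tree sDL evD; have [conn _ _] := tree.
have [H EH bdH] : exists2 H, H \in edge_sets & boundary H = boundary D.
  apply: boundary_onto_even_sets => //; last by rewrite odd_card_boundary.
  by apply/subsetP => v; rewrite inE => /andP [].
have sHI : H \subset inner_half_edges by move: EH; rewrite inE => /andP [].
have sKH : symdiff H D \subset half_edges T.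
  apply/subsetP => x; rewrite in_symdiff.
  by case: (boolP (x \in H)) => [/(subsetP sHI) | _ /(subsetP sDL)]; rewrite inE => /andP [].
exists (add_roots (symdiff H D)); split.
  apply: add_roots_cycle => // [x|].
    by rewrite !in_symdiff mem_iota_edge_set ?mem_iota_legs.
  by rewrite boundary_symdiff bdH; apply/eqP; rewrite symdiff_eq0.
rewrite legs_of_add_roots //; apply/setP => x; rewrite in_setI in_symdiff.
have [xL | xNL] := boolP (x \in legs T); last first.
  by rewrite andbF; apply/esym/negbTE; apply: contra xNL; exact: subsetP sDL x.
have xNH : x \notin H by apply: contraL xL => /(subsetP sHI)/inner_notin_legs.
by rewrite (negbTE xNH) andbT.
Qed.

End Boundary.

Theorem proposition5p18 (T : graph) (D : {set gX T}) :
  is_tree T -> D \subset legs T -> ~~ odd #|D| ->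
  exists! C : {set gX T}, is_cycle C /\ legs_of C = D.
Proof.
move=> tree sDL evD; have [C [cycC legsC]] := tree_cycle_exists tree sDL evD.
exists C; split => // C' [cycC' legsC'].
by apply: tree_cycle_uniq; rewrite ?legsC ?legsC'.
Qed.
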